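(* Let $a=(a_i)_{i\in\mathbb Z}$ be any sequence of complex numbers and $\mu$ a Young diagram. Then $$s_{\mu;a}(x(\mu);y(\mu))=\prod_{(i,j)\in\mu}(a_{\mu_i-i+1}-a_{j-\mu'_j})=\prod_{(i,j)\in\mu}(a_{\mu_i-i+1}+\widehat a_{\mu'_j-j+1}),$$ the products being over the boxes $(i,j)$ (row $i$, column $j$) of $\mu$. If the numbers $a_i$, $i\in\mathbb Z$, are pairwise distinct, then $s_{\mu;a}(x(\mu);y(\mu))\ne0$ for all $\mu$.
   Context: $\Lambda$ is the algebra of symmetric functions over $\mathbb C$ with complete homogeneous $h_k$, elementary $e_k$, power sums $\mathbf p_k$. For a sequence $a$ define $h_{k;a}=\sum_{i=1}^k(-1)^{k-i}e_{k-i}(a_1,\dots,a_{k-1})h_i$ ($k\ge1$), $h_{0;a}=1$, $h_{k;a}=0$ ($k<0$); $(\tau^ra)_i=a_{i+r}$; $s_{\mu;a}=\det[h_{\mu_i-i+j;\,\tau^{1-j}a}]_{i,j=1}^N$ for any $N\ge\ell(\mu)$. Dual sequence: $\widehat a_i=-a_{1-i}$. $\mu'$ is the transposed diagram. Each $f\in\Lambda$ is evaluated at $(x;y)\in\mathbb C^d\times\mathbb C^d$ via $\mathbf p_k\mapsto\sum_ix_i^k+(-1)^{k-1}\sum_jy_j^k$. For a nonempty diagram $\lambda=(p_1,\dots,p_d\mid q_1,\dots,q_d)$ in Frobenius notation ($p_i=\lambda_i-i$, $q_i=\lambda'_i-i$, $d$ the number of diagonal boxes), $(x(\lambda);y(\lambda))=(a_{p_1+1},\dots,a_{p_d+1};\widehat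 a_{q_1+1},\dots,\widehat a_{q_d+1})$; and $(x(\varnothing);y(\varnothing))=(0;0)$. *)

From HB Require Import structures.
From mathcomp Require Import all_boot all_order all_algebra.
From mathcomp Require Import complex.
From mathcomp Require Import Rstruct.
Set Implicit Arguments. Unset Strict Implicit. Unset Printing Implicit Defensive.
Import Order.TTheory GRing.Theory Num.Theory.
Local Open Scope ring_scope.

Definition CC : fieldType := (Rdefinitions.R)[i].

Definition is_partition (mu : seq nat) : bool :=
  sorted geq mu && all (fun m => 0 < m)%N mu.

(* mu_i, 1-indexed (0 if i > l(mu)). *)
Definition part (mu : seq nat) (i : nat) : nat := nth 0%N mu i.-1.

Definition conj_part (mu : seq nat) (j : nat) : nat :=
  count (fun m => j <= m)%N mu.

Definition diag_len (mu : seq nat) : nat :=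
  count (fun i => i <= part mu i)%N (iota 1 (size mu)).

Definition tau (r : int) (a : int -> CC) : int -> CC := fun i => a (i + r).
Definition dual_seq (a : int -> CC) : int -> CC := fun i => - a (1 - i).

(* Frobenius coordinates p_i = mu_i - i, q_i = mu'_i - i, and the point
   (x(mu); y(mu)) = (a_{p_1+1},...,a_{p_d+1}; hat a_{q_1+1},...,hat a_{q_d+1}). *)
Definition x_pt (mu : seq nat) (a : int -> CC) : seq CC :=
  [seq a ((part mu i)%:Z - i%:Z + 1) | i <- iota 1 (diag_len mu)].
Definition y_pt (mu : seq nat) (a : int -> CC) : seq CC :=
  [seq dual_seq a ((conj_part mu i)%:Z - i%:Z + 1) | i <- iota 1 (diag_len mu)].

Fixpoint esym (s : seq CC) (m : nat) : CC :=
  match s, m with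
  | [::], 0%N => 1
  | [::], _.+1 => 0
  | _ :: _, 0%N => 1
  | x :: s', m'.+1 => esym s' m + x * esym s' m'
  end.

(* p_k |-> sum_i x_i^k + (-1)^(k-1) sum_j y_j^k  (k >= 1) *)
Definition pxy (x y : seq CC) (k : nat) : CC :=
  \sum_(u <- x) u ^+ k + (-1) ^+ k.-1 * \sum_(v <- y) v ^+ k.

(* h_k is expressed through power sums by Newton's identity
   k h_k = sum_{r=1}^k p_r h_{k-r}, h_0 = 1; hl x y n = [:: h_0; ...; h_n]
   evaluated at (x;y). *)
Fixpoint hl (x y : seq CC) (n : nat) : seq CC :=
  match n with
  | 0%N => [:: 1]
  | n'.+1 =>
      let l := hl x y n' in
      rcons l ((n%:R)^-1 * \sum_(r < n) pxy x y r.+1 * nth 0 l (n - r.+1))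
  end.

Definition hxy (x y : seq CC) (k : nat) : CC := nth 0 (hl x y k) k.

Definition hka_xy (x y : seq CC) (a : int -> CC) (k : int) : CC :=
  match k with
  | Posz 0 => 1
  | Posz n.+1 =>
      \sum_(1 <= i < n.+2)
         (-1) ^+ (n.+1 - i) * esym [seq a (Posz j.+1) | j <- iota 0 n] (n.+1 - i)
         * hxy x y i
  | Negz _ => 0
  end.

Definition s_mu_a_xy (mu : seq nat) (a : int -> CC) (x y : seq CC) : CC :=
  \det (\matrix_(i < size mu, j < size mu)
          hka_xy x y (tau (1 - (j.+1)%:Z) a)
                 ((part mu i.+1)%:Z - (i.+1)%:Z + (j.+1)%:Z)).

Definition box_prod1 (mu : seq nat) (a : int -> CC) : CC :=
  \prod_(i < size mu) \prod_(j < part mu i.+1)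
     (a ((part mu i.+1)%:Z - (i.+1)%:Z + 1) - a ((j.+1)%:Z - (conj_part mu j.+1)%:Z)).

Definition box_prod2 (mu : seq nat) (a : int -> CC) : CC :=
  \prod_(i < size mu) \prod_(j < part mu i.+1)
     (a ((part mu i.+1)%:Z - (i.+1)%:Z + 1)
      + dual_seq a ((conj_part mu j.+1)%:Z - (j.+1)%:Z + 1)).

From Pilot Require Import Defs.
From HB Require Import structures.
From mathcomp Require Import all_boot all_order all_algebra.
From mathcomp Require Import complex Rstruct.
From mathcomp Require Import ring zify.
Set Implicit Arguments. Unset Strict Implicit. Unset Printing Implicit Defensive.
Import Order.TTheory GRing.Theory Num.Theory.
Local Open Scope ring_scope.

(* Let D and N be the monic polynomials with roots x(mu) and -y(mu).  By
   Newton's identities h_n(x; y) is, for n <= K, the coefficient of X^(K-n)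
   in the polynomial part of X^K N / D, so h_(k;b)(x; y) is the residue at
   infinity of (X - b_1) ... (X - b_(k-1)) N / D.  The numbers mu_i - i + 1 and
   j - mu'_j are complementary sets of integers (the Maya diagram of mu);
   hence in row i the pair (D, N) can be traded for
   Q_i = prod_(m <= i) (X - a_(mu_m - m + 1)) and
   P_i = prod_(j <= mu_i) (X - a_(j - mu'_j)), the factors that move being
   absorbed by the factorial power of the entry.  Column operations then
   replace the factorial power of column j by Q_(j-1), which makes the matrix
   triangular with diagonal entries P_i(a_(mu_i - i + 1)), the product over
   row i of the boxes of mu.  A row position never equals a column position,
   so these factors are nonzero when a is injective. *)

Section PolySize.
Variable R : nzRingType.
Implicit Types p q : {poly R}.

Lemma size_mul_le p q m n : (size p <= m)%N -> (size q <= n)%N ->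
  (size (p * q)%R <= (m + n).-1)%N.
Proof. by move=> hp hq; apply: leq_trans (size_polyMleq p q) _; lia. Qed.

Lemma size_add_le p q n : (size p <= n)%N -> (size q <= n)%N -> (size (p + q)%R <= n)%N.
Proof. by move=> hp hq; apply: leq_trans (size_polyD p q) _; rewrite geq_max hp. Qed.

Lemma size_sub_le p q n : (size p <= n)%N -> (size q <= n)%N -> (size (p - q)%R <= n)%N.
Proof. by rewrite -(size_polyN q); apply: size_add_le. Qed.

Lemma size_Mmonic_leq p q n : q \is monic ->
  (size (p * q)%R <= n + (size q).-1)%N -> (size p <= n)%N.
Proof.
move=> mq; have [->|p0] := eqVneq p 0; first by rewrite size_poly0.
have : (0 < size q)%N by rewrite size_poly_gt0 monic_neq0.
by rewrite size_Mmonic //; lia.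
Qed.

Lemma coef_Mmonic_top p q i : q \is monic -> (size p <= i.+1)%N ->
  (p * q)`_(i + (size q).-1) = p`_i.
Proof.
move=> mq sp; have [->|p0] := eqVneq p 0; first by rewrite mul0r !coef0.
have szpq := size_Mmonic p0 mq.
have q0 : (0 < size q)%N by rewrite size_poly_gt0 monic_neq0.
have [lt_pi|eq_pi] : (size p < i.+1)%N \/ size p = i.+1 by lia.
  by rewrite !nth_default // szpq; lia.
have := lead_coef_Mmonic p mq; rewrite /lead_coef szpq eq_pi.
by have -> : (i.+1 + size q).-1.-1 = (i + (size q).-1)%N by lia.
Qed.

Lemma size_Xderiv_le p : (size ('X * p^`())%R <= size p)%N.
Proof.
have [->|p0] := eqVneq p 0; first by rewrite deriv0 mulr0 size_poly0.
apply: leq_trans (size_polyMleq _ _) _; rewrite size_polyX.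
exact: lt_size_deriv p0.
Qed.

Lemma coef_Xderiv p i : ('X * p^`())`_i = p`_i *+ i.
Proof. by rewrite coefXM coef_deriv; case: i => [|i] //=; rewrite mulr0n. Qed.

Lemma coef_sumXn_mul (g : nat -> R) (C : {poly R}) K n :
  (size C <= K.+1)%N -> (n <= K)%N ->
  ((\sum_(r < K) g r *: 'X^(K - r.+1)) * C)`_(K + (K - n)) =
  \sum_(r < n) g r * C`_(K - (n - r.+1)).
Proof.
move=> sC nK.
rewrite mulr_suml coef_sum (big_ord_widen K (fun r => g r * C`_(K - (n - r.+1))) nK).
rewrite [RHS]big_mkcond /=; apply: eq_bigr => r _; have r_lt := ltn_ord r.
rewrite -scalerAl coefZ coefXnM ifF; last by lia.
case: ifP => rn; first by congr (_ * C`_ _); lia.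
by rewrite nth_default ?mulr0 // (leq_trans sC) //; move/negbT: rn; lia.
Qed.

End PolySize.

Section Residue.
Variable F : fieldType.
Implicit Types p q Q M : {poly F}.

(* For monic [Q], the coefficient of X^-1 in the expansion of p / Q at infinity. *)
Definition residue Q p : F := (p %% Q)`_(size Q).-2.

Lemma residue_mull Q p : residue Q (p * Q) = 0.
Proof. by rewrite /residue modp_mull coef0. Qed.

Lemma residueZ Q c p : residue Q (c *: p) = c * residue Q p.
Proof. by rewrite /residue modpZl coefZ. Qed.

Lemma residue_sum Q I (r : seq I) (P : pred I) (f : I -> {poly F}) :
  residue Q (\sum_(i <- r | P i) f i) = \sum_(i <- r | P i) residue Q (f i).
Proof.
apply: big_morph => [p q|]; first by rewrite /residue modpD coefD.
by rewrite /residue mod0p coef0.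
Qed.

Lemma residue_small Q p : (size p < size Q)%N -> residue Q p = p`_(size Q).-2.
Proof. by move=> h; rewrite /residue modp_small. Qed.

Lemma residue_Mmonic Q M p : Q \is monic -> M \is monic ->
  residue (Q * M) (p * M) = residue Q p.
Proof.
move=> mQ mM; set r : {poly F} := p %% Q.
have sQ : (0 < size Q)%N by rewrite size_poly_gt0 monic_neq0.
have sM : (0 < size M)%N by rewrite size_poly_gt0 monic_neq0.
have sr : (size r < size Q)%N by rewrite ltn_modp monic_neq0.
have szQM : size (Q * M) = (size Q + size M).-1 by rewrite size_Mmonic ?monic_neq0.
have sizes_rM : (size (r * M)%R < size (Q * M)%R)%N.
  have [->|r0] := eqVneq r 0; first by rewrite mul0r size_poly0 szQM; lia.
  by rewrite szQM size_Mmonic //; lia.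
have eM : p * M = (p %/ Q) * (Q * M) + r * M by rewrite {1}(divp_eq p Q) mulrDl mulrA.
rewrite /residue -(modpP eM sizes_rM) szQM -/r.
have [Q1|Q_gt1] := leqP (size Q) 1.
  have -> : r = 0 by apply/eqP; rewrite -size_poly_eq0; lia.
  by rewrite mul0r !coef0.
have -> : ((size Q + size M).-1.-2 = (size Q).-2 + (size M).-1)%N by lia.
by rewrite coef_Mmonic_top //; move: (size r) (size Q) sr Q_gt1 => m n; lia.
Qed.

Lemma residue_XsubC c M p : M \is monic -> residue (('X - c%:P) * M) (p * M) = p.[c].
Proof.
move=> mM; rewrite residue_Mmonic ?monicXsubC //.
by rewrite /residue modp_XsubC size_XsubC coefC.
Qed.

End Residue.

Section PowerSums.
Variable R : comNzRingType.
Implicit Types (ws : seq R) (z : R).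

Definition powsum ws r : R := \sum_(w <- ws) w ^+ r.

Definition rootpoly ws : {poly R} := \prod_(w <- ws) ('X - w%:P).

Lemma rootpoly_monic ws : rootpoly ws \is monic.
Proof. exact: monic_prod_XsubC. Qed.

Lemma size_rootpoly ws : size (rootpoly ws) = (size ws).+1.
Proof. exact: size_prod_XsubC. Qed.

(* The polynomial part of z X^K / (X - z). *)
Definition geompoly z K : {poly R} := \sum_(r < K) z ^+ r.+1 *: 'X^(K - r.+1).

Lemma geompolyS z K : geompoly z K.+1 = 'X * geompoly z K + (z ^+ K.+1)%:P.
Proof.
rewrite /geompoly big_ord_recr /= subnn expr0 alg_polyC mulr_sumr; congr (_ + _).
by apply: eq_bigr => r _; rewrite -scalerAr -exprS subSn.
Qed.

Lemma mulXsubC_geompoly z K :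
  ('X - z%:P) * geompoly z K = z%:P * 'X^K - (z ^+ K.+1)%:P.
Proof.
elim: K => [|K IH]; first by rewrite /geompoly big_ord0 mulr0 expr1 mulr1 subrr.
by rewrite geompolyS mulrDr mulrCA IH !exprS !polyCM; ring.
Qed.

Lemma size_geompoly z K : (size (geompoly z K) <= K)%N.
Proof.
elim: K => [|K IH]; first by rewrite /geompoly big_ord0 size_poly0.
rewrite geompolyS size_add_le //; last by rewrite (leq_trans (size_polyC_leq1 _)).
have sX : (size ('X : {poly R}) <= 2)%N by rewrite size_polyX.
exact: size_mul_le sX IH.
Qed.

Definition powsum_poly ws K : {poly R} := \sum_(r < K) powsum ws r.+1 *: 'X^(K - r.+1).

Lemma powsum_polyE ws K : powsum_poly ws K = \sum_(w <- ws) geompoly w K.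
Proof.
rewrite /powsum_poly /geompoly exchange_big /=; apply: eq_bigr => r _.
by rewrite /powsum scaler_suml.
Qed.

Lemma size_powsum_poly ws K : (size (powsum_poly ws K) <= K)%N.
Proof.
rewrite powsum_polyE; elim: ws => [|w ws IH]; first by rewrite big_nil size_poly0.
by rewrite big_cons size_add_le ?size_geompoly.
Qed.

(* For D = rootpoly ws, X D'/D = size ws + sum_(r >= 1) powsum ws r X^-r;
   truncating the sum at r = K leaves an error of degree < size ws. *)
Definition logderiv_defect ws K : {poly R} :=
  'X * 'X^K * (rootpoly ws)^`()
  - ((size ws)%:R * 'X^K + powsum_poly ws K) * rootpoly ws.

Lemma logderiv_defect_cons w ws K :
  logderiv_defect (w :: ws) K =
  ('X - w%:P) * logderiv_defect ws K + (w ^+ K.+1)%:P * rootpoly ws.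
Proof.
have -> : (w ^+ K.+1)%:P = w%:P * 'X^K - ('X - w%:P) * geompoly w K.
  by rewrite mulXsubC_geompoly; ring.
rewrite /logderiv_defect !powsum_polyE /rootpoly !big_cons derivM derivXsubC.
by rewrite /= -addn1 natrD; ring.
Qed.

Lemma size_logderiv_defect ws K : (size (logderiv_defect ws K) <= size ws)%N.
Proof.
elim: ws => [|w ws IH].
  rewrite /logderiv_defect powsum_polyE /rootpoly !big_nil derivC /=.
  by rewrite !(mulr0, mul0r, addr0, subrr) size_poly0.
rewrite logderiv_defect_cons size_add_le //.
  have sXw : (size ('X - w%:P)%R <= 2)%N by rewrite size_XsubC.
  exact: size_mul_le sXw IH.
have sD : (size (rootpoly ws) <= (size ws).+1)%N by rewrite size_rootpoly.
exact: size_mul_le (size_polyC_leq1 _) sD.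
Qed.

End PowerSums.

Section NewtonQuotient.
Variables (F : fieldType) (xs zs : seq F) (K : nat).
Hypothesis size_zs : size zs = size xs.
Hypothesis K_gt0 : (0 < K)%N.

Local Notation d := (size xs).
Local Notation D := (rootpoly xs).
Local Notation N := (rootpoly zs).

(* The polynomial part of X^K N / D, whose coefficient of X^(K - n) is the
   complete supersymmetric function h_n(xs; -zs). *)
Definition hquot : {poly F} := ('X^K * N) %/ D.

Local Notation C := hquot.
Local Notation rem := (('X^K * N) %% D).

Let D_monic : D \is monic. Proof. exact: rootpoly_monic. Qed.
Let size_D : size D = d.+1. Proof. exact: size_rootpoly. Qed.
Let size_N : size N = d.+1. Proof. by rewrite size_rootpoly size_zs. Qed.

Let size_rem : (size rem <= d)%N.
Proof. by rewrite -ltnS -size_D ltn_modp monic_neq0. Qed.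

Let size_XK : (size ('X^K : {poly F}) <= K.+1)%N. Proof. by rewrite size_polyXn. Qed.

Let hquot_eq : 'X^K * N = C * D + rem. Proof. exact: divp_eq. Qed.

Let hquot_mulD : C * D = 'X^K * N - rem.
Proof. by apply/esym/eqP; rewrite subr_eq -hquot_eq. Qed.

Lemma size_hquot : (size C <= K.+1)%N.
Proof.
apply: (size_Mmonic_leq D_monic); rewrite hquot_mulD size_D size_sub_le //.
  by rewrite size_monicM ?monicXn ?monic_neq0 ?rootpoly_monic // size_polyXn size_N; lia.
by rewrite (leq_trans size_rem) //; lia.
Qed.

Lemma coef_hquot_K : C`_K = 1.
Proof.
have := coef_Mmonic_top D_monic size_hquot.
rewrite hquot_mulD size_D coefB coefXnM ifF; last by lia.
rewrite [rem`_ _]nth_default; last by rewrite (leq_trans size_rem) //; lia.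
have -> : (K + d - K = d)%N by lia.
by rewrite subr0 -{1}(monicP (rootpoly_monic zs)) /lead_coef size_N => ->.
Qed.

Local Notation Px := (powsum_poly xs K).
Local Notation Pz := (powsum_poly zs K).

(* Of degree < K, because X C'/C ~ K + X N'/N - X D'/D. *)
Definition newton_defect : {poly F} :=
  'X^K * (K%:R * C - 'X * C^`()) - (Px - Pz) * C.

Lemma newton_defect_mulD : newton_defect * D =
  C * logderiv_defect xs K
  + 'X^K * ('X * rem^`() - (K + d)%:R * rem - logderiv_defect zs K) - Pz * rem.
Proof.
have dG : 'X * ('X^K * N)^`() = K%:R * 'X^K * N + 'X * 'X^K * N^`().
  have [k ->] : exists k, K = k.+1 by exists K.-1; rewrite prednK.
  by rewrite derivM derivXn /= exprS; ring.
apply/eqP; rewrite -subr_eq0; apply/eqP; transitivity (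
  'X^K * ('X * ('X^K * N)^`() - 'X * (C * D + rem)^`())
  - ((K + d)%:R * 'X^K + Pz) * ('X^K * N - (C * D + rem))).
  by rewrite dG /newton_defect /logderiv_defect size_zs derivD derivM natrD; ring.
by rewrite -hquot_eq !subrr mulr0 mulr0 subrr.
Qed.

Lemma size_newton_defect : (size newton_defect <= K)%N.
Proof.
apply: (size_Mmonic_leq D_monic); rewrite newton_defect_mulD size_D /=.
have sKd : (size ((K + d)%:R : {poly F}) <= 1)%N by rewrite -polyC_natr size_polyC_leq1.
have sPz := size_powsum_poly zs K.
have sLz : (size (logderiv_defect zs K) <= d)%N by rewrite -size_zs size_logderiv_defect.
apply: size_sub_le; first apply: size_add_le.
- exact: size_mul_le size_hquot (size_logderiv_defect xs K).
- apply: size_mul_le size_XK _; apply: size_sub_le sLz; apply: size_sub_le.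
    exact: leq_trans (size_Xderiv_le _) size_rem.
  exact: size_mul_le sKd size_rem.
- by apply: leq_trans (size_mul_le sPz size_rem) _; lia.
Qed.

Lemma newton_hquot n : (0 < n <= K)%N ->
  n%:R * C`_(K - n) =
  \sum_(r < n) (powsum xs r.+1 - powsum zs r.+1) * C`_(K - (n - r.+1)).
Proof.
move=> /andP[n_gt0 nK].
have : newton_defect`_(K + (K - n)) = 0.
  by rewrite nth_default // (leq_trans size_newton_defect) // leq_addr.
rewrite coefB coefXnM ifF; last by lia.
rewrite coefB mulr_natl coefMn coef_Xderiv -mulrnBr; last by lia.
have -> : (K + (K - n) - K = K - n)%N by lia.
have -> : (K - (K - n) = n)%N by lia.
have -> : Px - Pz = \sum_(r < K) (powsum xs r.+1 - powsum zs r.+1) *: 'X^(K - r.+1).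
  by rewrite -sumrB; apply: eq_bigr => r _; rewrite scalerBl.
rewrite (@coef_sumXn_mul _ (fun r => powsum xs r.+1 - powsum zs r.+1)) ?size_hquot //.
by move=> /eqP; rewrite subr_eq0 => /eqP <-; rewrite mulr_natl.
Qed.

Lemma residue_hquot (W : {poly F}) : (size W <= K)%N -> (W * C)`_K.-1 = residue D (W * N).
Proof.
move=> sW; set q := (W * N) %/ D; set r := (W * N) %% D.
have sr : (size r <= d)%N by rewrite -ltnS -size_D ltn_modp monic_neq0.
have eV : (W * C - 'X^K * q) * D = 'X^K * r - W * rem.
  apply/eqP; rewrite -subr_eq0; apply/eqP; transitivity (
    W * (C * D + rem - 'X^K * N) - 'X^K * (q * D + r - W * N)); first by ring.
  by rewrite -hquot_eq -divp_eq !subrr !mulr0 subrr.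
have sWrem : (size (W * rem)%R <= K + d - 1)%N.
  by apply: leq_trans (size_mul_le sW size_rem) _; lia.
have sV : (size (W * C - 'X^K * q)%R <= K)%N.
  apply: (size_Mmonic_leq D_monic); rewrite eV size_D size_sub_le //.
    by apply: leq_trans (size_mul_le size_XK sr) _; lia.
  by apply: leq_trans sWrem _; lia.
have sV' : (size (W * C - 'X^K * q)%R <= K.-1.+1)%N by rewrite prednK.
have := coef_Mmonic_top D_monic sV'; rewrite eV size_D /= coefB.
rewrite [(W * rem)`_ _]nth_default; last by apply: leq_trans sWrem _; lia.
rewrite subr0 coefB [('X^K * q)`_ _]coefXnM ifT ?subr0; last by lia.
rewrite coefXnM => <-.
have [d0|d_gt0] := posnP d.
  rewrite ifT; last by lia.
  have r0 : r = 0 by apply/eqP; rewrite -size_poly_eq0; lia.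
  by rewrite /residue size_D d0 -/r r0 coef0.
by rewrite ifF; [rewrite /residue size_D /=; congr (r`_ _); lia | lia].
Qed.

End NewtonQuotient.

Lemma pxy_powsum (xs ys : seq CC) r :
  pxy xs ys r.+1 = powsum xs r.+1 - powsum (map -%R ys) r.+1.
Proof.
rewrite /pxy /powsum big_map -sumrN mulr_sumr; congr (_ + _); apply: eq_bigr => y _.
by rewrite [(- y) ^+ _]exprNn [X in - (X * _)]exprS mulN1r mulNr opprK.
Qed.

Lemma hxy_rec (xs ys : seq CC) n : hxy xs ys n.+1 =
  n.+1%:R^-1 * \sum_(r < n.+1) pxy xs ys r.+1 * hxy xs ys (n.+1 - r.+1).
Proof.
have size_hl m : size (hl xs ys m) = m.+1 by elim: m => //= m IH; rewrite size_rcons IH.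
have nth_hl m k : (k <= m)%N -> nth 0 (hl xs ys m) k = hxy xs ys k.
  elim: m => [|m IH] k_le; first by case: k k_le.
  have [->|k_lt] := eqVneq k m.+1; first by [].
  by rewrite /= nth_rcons size_hl ifT ?IH //; lia.
rewrite /hxy /= nth_rcons size_hl ltnn eqxx; congr (_ * _).
by apply: eq_bigr => r _; rewrite nth_hl //; lia.
Qed.

Lemma hxy_hquot (xs ys : seq CC) K n : size ys = size xs -> (0 < K)%N -> (n <= K)%N ->
  hxy xs ys n = (hquot xs (map -%R ys) K)`_(K - n).
Proof.
move=> size_ys K_gt0; have size_zs : size (map -%R ys) = size xs by rewrite size_map.
elim/ltn_ind: n => -[_ _|n IH nK]; first by rewrite subn0 coef_hquot_K.
have n1_neq0 : (n.+1%:R : CC) != 0 by rewrite pnatr_eq0.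
rewrite hxy_rec -[RHS](mulKf n1_neq0) (newton_hquot size_zs) //.
by congr (_ * _); apply: eq_bigr => r _; rewrite pxy_powsum IH //; lia.
Qed.

Lemma esym_gt_size (s : seq CC) k : (size s < k)%N -> Defs.esym s k = 0.
Proof.
elim: s k => [|x s IH] [|k] //= k_gt.
by rewrite ltnS in k_gt; rewrite !IH ?mulr0 ?addr0 // ltnW.
Qed.

Lemma coef_rootpoly_esym (s : seq CC) k : (k <= size s)%N ->
  (rootpoly s)`_(size s - k) = (-1) ^+ k * Defs.esym s k.
Proof.
elim: s k => [|x s IH] k k_le.
  by case: k k_le => // _; rewrite /rootpoly big_nil coef1 mulr1.
have lead_s : (rootpoly s)`_(size s) = 1.
  by have := monicP (rootpoly_monic s); rewrite /lead_coef size_rootpoly.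
rewrite /rootpoly big_cons -/(rootpoly s) mulrBl coefB coefXM coefCM /=.
case: k k_le => [_|k /= k_le].
  rewrite subn0 lead_s nth_default ?size_rootpoly // mulr0 subr0 expr0 mul1r.
  by case: (s).
rewrite subSS (IH k) 1?exprS //.
have [k_eq|k_lt] := eqVneq k (size s).
  by rewrite [Defs.esym s k.+1]esym_gt_size k_eq ?subnn //=; ring.
rewrite ifF; last by rewrite subn_eq0 leqNgt ltn_neqAle k_lt -ltnS k_le.
have -> : (size s - k).-1 = (size s - k.+1)%N by lia.
rewrite IH; last by rewrite ltn_neqAle k_lt -ltnS k_le.
by rewrite exprS; ring.
Qed.

Lemma hka_residue (xs ys : seq CC) (b : int -> CC) n : size ys = size xs ->
  hka_xy xs ys b n.+1 = residue (rootpoly xs)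
    (rootpoly [seq b j.+1%:Z | j <- iota 0 n] * rootpoly (map -%R ys)).
Proof.
move=> size_ys; set bs := [seq b _ | j <- _].
have size_bs : size bs = n by rewrite size_map size_iota.
rewrite -(residue_hquot _ (ltn0Sn n)) ?size_map ?size_rootpoly ?size_bs //=.
rewrite /hka_xy -/bs big_add1 big_mkord coefM; apply: eq_bigr => i _.
have i_le : (i <= n)%N by rewrite -ltnS.
rewrite (hxy_hquot size_ys (ltn0Sn n) (ltn_ord i)) subSS.
rewrite -[X in (rootpoly bs)`_X](subKn i_le) -[X in (rootpoly bs)`_(X - _)]size_bs.
by rewrite coef_rootpoly_esym // size_bs leq_subr.
Qed.

Lemma geq_trans : transitive geq.
Proof. by move=> y x z /= yx zy; apply: leq_trans zy yx. Qed.

Lemma ltn_count_sorted_geq (s : seq nat) k i : sorted geq s -> (0 < k)%N ->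
  (i < count (fun m => k <= m) s)%N = (k <= nth 0%N s i)%N.
Proof.
elim: s i => [|x s IH] i s_sorted k_gt0 /=; first by rewrite nth_nil; case: k k_gt0.
have le_s_x : all (geq x) s := order_path_min geq_trans s_sorted.
have {}IH := IH _ (path_sorted s_sorted) k_gt0.
have [k_le_x|x_lt_k] := leqP k x; first by case: i => [|i] //=; rewrite add1n ltnS.
have small_s : {in s, forall y, y < k}%N.
  by move=> y y_s; apply: leq_ltn_trans x_lt_k; apply: (allP le_s_x).
have -> : count (fun m => k <= m)%N s = 0%N.
  by apply/eqP; rewrite -leqn0 leqNgt -has_count; apply/hasPn => y /small_s; rewrite ltnNge.
case: i => [|i] /=; first by rewrite [RHS]leqNgt x_lt_k.
have [i_lt|i_ge] := ltnP i (size s); last by rewrite nth_default // [RHS]leqNgt k_gt0.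
by rewrite [RHS]leqNgt small_s ?mem_nth.
Qed.

Lemma ltn_count_iota (q : pred nat) n m : (forall k, q k.+1 -> q k) ->
  (m < count q (iota 0 n))%N = (m < n)%N && q m.
Proof.
move=> q_down; have q_le k l : q l -> (k <= l)%N -> q k.
  elim: l => [|l IHl] ql; first by rewrite leqn0 => /eqP ->.
  by rewrite leq_eqVlt ltnS => /orP[/eqP -> // | /IHl]; apply; apply: q_down.
elim: n => [|n IH]; first by rewrite /= ltn0.
have -> : iota 0 n.+1 = iota 0 n ++ [:: n] by rewrite -addn1 iotaD.
rewrite count_cat /= addn0.
case qn: (q n).
  have -> : count q (iota 0 n) = n.
    apply/eqP; rewrite -[X in _ == X](size_iota 0 n) -all_count; apply/allP => k.
    by rewrite mem_iota => /andP[_ k_lt]; apply: q_le qn _; rewrite ltnW.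
  by rewrite addn1; case: ltnP => //= m_lt; rewrite (q_le _ _ qn).
rewrite addn0 IH; have [->|m_neq] := eqVneq m n; first by rewrite qn !andbF.
by rewrite ltnS [in RHS]leq_eqVlt (negbTE m_neq).
Qed.

(* Row and column positions of the Maya diagram of mu, with 0-based i and j;
   together they enumerate Z without repetition. *)
Definition rowpos (mu : seq nat) (i : nat) : int := (nth 0%N mu i)%:Z - i%:Z.
Definition colpos (mu : seq nat) (j : nat) : int := j.+1%:Z - (conj_part mu j.+1)%:Z.

Section Partition.
Variable mu : seq nat.
Hypothesis mu_part : is_partition mu.
Local Notation N := (size mu).

Let mu_sorted : sorted geq mu. Proof. by case/andP: mu_part. Qed.

Lemma leq_nth_partition i j : (i <= j)%N -> (nth 0%N mu j <= nth 0%N mu i)%N.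
Proof.
move=> ij; have [j_lt|j_ge] := ltnP j N; last by rewrite nth_default.
by apply: (sorted_leq_nth geq_trans leqnn) => //; rewrite inE (leq_ltn_trans ij).
Qed.

Lemma nth_partition_gt0 i : (i < N)%N -> (0 < nth 0%N mu i)%N.
Proof. by case/andP: mu_part => _ /all_nthP; apply. Qed.

Lemma ltn_conj_part i j : (i < conj_part mu j.+1)%N = (j < nth 0%N mu i)%N.
Proof. exact: ltn_count_sorted_geq. Qed.

Lemma ltn_diag_len m : (m < diag_len mu)%N = (m < nth 0%N mu m)%N.
Proof.
have -> : diag_len mu = count (fun k => k < nth 0%N mu k)%N (iota 0 N).
  by rewrite /diag_len (iotaDl 1 0) count_map.
rewrite ltn_count_iota; last first.
  by move=> k lt_k1; apply: leq_trans (ltnW lt_k1) (leq_nth_partition (leqnSn k)).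
by case: ltnP => // m_ge; rewrite nth_default.
Qed.

Lemma diag_len_leq_nth0 : (diag_len mu <= nth 0%N mu 0)%N.
Proof.
have [->//|d_gt0] := posnP (diag_len mu).
have lt_d := leqnn (diag_len mu).
rewrite -[X in (X <= _)%N](prednK d_gt0) ltn_diag_len in lt_d.
by rewrite -(prednK d_gt0); apply: leq_trans lt_d (leq_nth_partition (leq0n _)).
Qed.

Lemma diag_len_leq_size : (diag_len mu <= N)%N.
Proof. by rewrite /diag_len (leq_trans (count_size _ _)) ?size_iota. Qed.

Lemma ltr_rowpos i j : (i < j)%N -> rowpos mu j < rowpos mu i.
Proof. by move=> ij; have := leq_nth_partition (ltnW ij); rewrite /rowpos; lia. Qed.

Lemma ler_rowpos i j : (rowpos mu i <= rowpos mu j) = (j <= i)%N.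
Proof.
case: leqP => [|/ltr_rowpos/lt_geF //].
by rewrite leq_eqVlt => /orP[/eqP -> | /ltr_rowpos/ltW ->]; rewrite ?lexx.
Qed.

Lemma ltr_colpos i j : (i < j)%N -> colpos mu i < colpos mu j.
Proof.
move=> ij; have : (conj_part mu j.+1 <= conj_part mu i.+1)%N.
  by apply: sub_count => m /=; apply: leq_trans; rewrite ltnS ltnW.
by rewrite /colpos; lia.
Qed.

Lemma rowpos_inj : injective (rowpos mu).
Proof.
move=> i j eq_ij; apply/eqP; apply: contraT; rewrite neq_ltn.
by case/orP => /ltr_rowpos; rewrite eq_ij ltxx.
Qed.

Lemma colpos_inj : injective (colpos mu).
Proof.
move=> i j eq_ij; apply/eqP; apply: contraT; rewrite neq_ltn.
by case/orP => /ltr_colpos; rewrite eq_ij ltxx.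
Qed.

Lemma rowpos_neq_colpos i j : rowpos mu i != colpos mu j.
Proof. by have := ltn_conj_part i j; rewrite /rowpos /colpos; case: ltnP; lia. Qed.

Lemma colpos_of_not_rowpos c :
  (forall i, rowpos mu i != c) -> exists j, colpos mu j = c.
Proof.
move=> not_rowpos.
have ex_below : exists i, rowpos mu i < c.
  by exists (`|c|.+1 + N)%N; rewrite /rowpos nth_default; lia.
case: (ex_minnP ex_below) => i rowpos_i_lt i_min.
have above k : (k < i)%N -> c < rowpos mu k.
  move=> k_lt; rewrite lt_neqAle eq_sym not_rowpos leNgt /=.
  by apply/negP => /i_min; lia.
pose j := `|(c + i%:Z - 1)%R|%N.
have j_def : j.+1%:Z = c + i%:Z by move: rowpos_i_lt; rewrite /j /rowpos; lia.
exists j; clearbody j.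
rewrite /colpos; suff -> : conj_part mu j.+1 = i by lia.
apply/eqP; rewrite eqn_leq leqNgt ltn_conj_part -leqNgt.
have -> /= : (nth 0%N mu i <= j)%N by move: rowpos_i_lt; rewrite /rowpos; lia.
case: i {i_min rowpos_i_lt} j_def above => // i j_def above.
by rewrite ltn_conj_part; have := above i (ltnSn i); rewrite /rowpos; lia.
Qed.

End Partition.

Section BigOrd.
Context {R : Type} {idx : R} {op : R -> R -> R}.

Lemma big_iota_ord n (f : nat -> R) :
  \big[op/idx]_(m <- iota 0 n) f m = \big[op/idx]_(m < n) f m.
Proof. by rewrite -(big_mkord xpredT) /index_iota subn0. Qed.

Lemma big_ord_restrict M n (P : pred 'I_M) (f : nat -> R) :
  (n <= M)%N -> (forall m : 'I_M, P m = (m < n)%N) ->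
  \big[op/idx]_(m < M | P m) f m = \big[op/idx]_(m < n) f m.
Proof. by move=> nM P_lt; rewrite (big_ord_widen M f nM); apply: eq_bigl. Qed.

End BigOrd.

Lemma size_prod_ord_XsubC (R : nzRingType) n (f : nat -> R) :
  size (\prod_(m < n) ('X - (f m)%:P)) = n.+1.
Proof. by rewrite -(big_iota_ord n (fun m => 'X - (f m)%:P)) size_prod_XsubC size_iota. Qed.

Section FactorialPolys.
Variables (F : fieldType) (a : int -> F).

Definition facpow (lo : int) (n : nat) : {poly F} :=
  \prod_(m < n) ('X - (a (lo + m%:Z))%:P).

Lemma facpow_monic lo n : facpow lo n \is monic.
Proof. exact: monic_prod_XsubC. Qed.

Lemma size_facpow lo n : size (facpow lo n) = n.+1.
Proof. exact: (size_prod_ord_XsubC n (fun m => a (lo + m%:Z))). Qed.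

Lemma rootpoly_facpow lo n : rootpoly [seq a (lo + m%:Z) | m <- iota 0 n] = facpow lo n.
Proof. by rewrite /rootpoly big_map big_iota_ord. Qed.

Lemma facpowD lo n1 n2 : facpow lo (n1 + n2) = facpow lo n1 * facpow (lo + n1%:Z) n2.
Proof.
rewrite /facpow big_split_ord /=; congr (_ * _); apply: eq_bigr => m _.
by rewrite PoszD addrA.
Qed.

Lemma facpowS lo n : facpow lo n.+1 = ('X - (a lo)%:P) * facpow (lo + 1) n.
Proof. by rewrite -add1n facpowD /facpow big_ord1 addr0. Qed.

Variables (mu : seq nat).
Hypothesis mu_part : is_partition mu.
Local Notation N := (size mu).
Local Notation mu1 := (nth 0%N mu 0).

Definition rowpoly (c : int) : {poly F} :=
  \prod_(i < N | c <= rowpos mu i) ('X - (a (rowpos mu i))%:P).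

Definition colpoly (c : int) : {poly F} :=
  \prod_(j < mu1 | colpos mu j < c) ('X - (a (colpos mu j))%:P).

Lemma rowpoly_monic c : rowpoly c \is monic. Proof. exact: monic_prod_XsubC. Qed.
Lemma colpoly_monic c : colpoly c \is monic. Proof. exact: monic_prod_XsubC. Qed.

Lemma rowpoly_colpoly_step c : 1 - N%:Z <= c -> c <= mu1%:Z ->
  (rowpoly c = ('X - (a c)%:P) * rowpoly (c + 1) /\ colpoly (c + 1) = colpoly c) \/
  (rowpoly c = rowpoly (c + 1) /\ colpoly (c + 1) = ('X - (a c)%:P) * colpoly c).
Proof.
move=> c_ge c_le.
case: (boolP [exists i : 'I_N, rowpos mu i == c]).
  move=> /existsP[i /eqP rowpos_i].
  left; split.
    rewrite /rowpoly (bigD1 i) ?rowpos_i //=; congr (_ * _); apply: eq_bigl => k.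
    rewrite -(inj_eq val_inj) -(inj_eq (rowpos_inj mu_part)) rowpos_i.
    by rewrite lezD1 lt_neqAle andbC eq_sym.
  apply: eq_bigl => j; rewrite ltzD1 le_eqVlt -rowpos_i.
  by rewrite eq_sym (negbTE (rowpos_neq_colpos mu_part _ _)).
move=> /existsPn not_rowpos.
have not_rowpos' i : rowpos mu i != c.
  have [i_lt|i_ge] := ltnP i N; first exact: (not_rowpos (Ordinal i_lt)).
  by rewrite /rowpos nth_default //; apply/eqP; lia.
have [j colpos_j] := colpos_of_not_rowpos mu_part not_rowpos'.
have j_lt : (j < mu1)%N.
  rewrite ltnNge; apply/negP => j_ge; move: c_le colpos_j; rewrite /colpos.
  have -> : conj_part mu j.+1 = 0%N.
    by apply/eqP; rewrite -leqn0 leqNgt ltn_conj_part // -leqNgt (leq_trans j_ge).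
  lia.
right; split.
  by apply: eq_bigl => k; rewrite lezD1 le_eqVlt eq_sym (negbTE (not_rowpos' k)).
rewrite /colpoly (bigD1 (Ordinal j_lt)) /=; last by rewrite colpos_j ltzD1.
rewrite colpos_j; congr (_ * _); apply: eq_bigl => k.
rewrite -(inj_eq val_inj) /= -(inj_eq (colpos_inj mu_part)) colpos_j ltzD1 le_eqVlt.
by case: eqP => [->|_]; rewrite ?ltxx ?andbT.
Qed.

(* Each factor X - a_c of the factorial power either joins colpoly or cancels
   against the factor leaving rowpoly. *)
Lemma residue_shift n c g : 1 - N%:Z <= c -> c + n%:Z <= mu1%:Z + 1 ->
  residue (rowpoly c) (colpoly c * facpow c n * g) =
  residue (rowpoly (c + n%:Z)) (colpoly (c + n%:Z) * g).
Proof.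
elim: n c => [|n IH] c c_ge c_le; first by rewrite /facpow big_ord0 mulr1 addr0.
have -> : c + n.+1%:Z = c + 1 + n%:Z by lia.
rewrite facpowS -IH; [|lia|lia].
have [|[-> ->]|[-> ->]] := rowpoly_colpoly_step c_ge _; first by lia.
  rewrite -(residue_Mmonic _ (rowpoly_monic _) (monicXsubC (a c))).
  by congr residue; ring.
by congr residue; ring.
Qed.

Lemma rowpoly_rowpos i : (i < N)%N ->
  rowpoly (rowpos mu i) = \prod_(m < i.+1) ('X - (a (rowpos mu m))%:P).
Proof.
move=> i_lt; apply: (big_ord_restrict (fun m => 'X - (a (rowpos mu m))%:P)) => // m.
by rewrite ler_rowpos.
Qed.

Lemma colpoly_rowpos i : (i < N)%N ->
  colpoly (rowpos mu i) = \prod_(m < nth 0%N mu i) ('X - (a (colpos mu m))%:P).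
Proof.
move=> i_lt; apply: (big_ord_restrict (fun m => 'X - (a (colpos mu m))%:P)).
  exact: leq_nth_partition.
move=> m.
have := ltn_conj_part mu_part i m; rewrite /rowpos /colpos.
by case: ltnP => m_i; case: ltnP => c_i //; lia.
Qed.

Lemma rowpoly1 : rowpoly 1 = \prod_(m < diag_len mu) ('X - (a (rowpos mu m))%:P).
Proof.
apply: (big_ord_restrict (fun m => 'X - (a (rowpos mu m))%:P)) => [|m].
  exact: diag_len_leq_size.
by rewrite ltn_diag_len // /rowpos; apply/idP/idP; lia.
Qed.

Lemma colpoly1 : colpoly 1 = \prod_(m < diag_len mu) ('X - (a (colpos mu m))%:P).
Proof.
apply: (big_ord_restrict (fun m => 'X - (a (colpos mu m))%:P)) => [|m].
  exact: diag_len_leq_nth0.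
by rewrite ltn_diag_len // -ltn_conj_part // /colpos; apply/idP/idP; lia.
Qed.

End FactorialPolys.

Section ResidueDeterminant.
Variable F : fieldType.

(* Passing from one family of monic polynomials of degrees 0, ..., n - 1 to
   another is a unitriangular column operation. *)
Lemma det_residue_monic_basis n (Q P f g : 'I_n -> {poly F}) :
  (forall j, f j \is monic) -> (forall j : 'I_n, size (f j) = j.+1) ->
  (forall j, g j \is monic) -> (forall j : 'I_n, size (g j) = j.+1) ->
  \det (\matrix_(i, j) residue (Q i) (P i * f j)) =
  \det (\matrix_(i, j) residue (Q i) (P i * g j)).
Proof.
pose A := \matrix_(i < n, l < n) residue (Q i) (P i * 'X^l).
suff coef_change h : (forall j, h j \is monic) -> (forall j : 'I_n, size (h j) = j.+1) ->
    \det (\matrix_(i, j) residue (Q i) (P i * h j)) = \det A.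
  by move=> mf sf mg sg; rewrite !coef_change.
move=> mh sh; have -> : \matrix_(i, j) residue (Q i) (P i * h j) =
    A *m \matrix_(l, j) (h j)`_l.
  apply/matrixP => i j; rewrite !mxE -(take_poly_id (_ : size (h j) <= n)%N) ?sh //.
  rewrite /take_poly poly_def mulr_sumr residue_sum; apply: eq_bigr => l _.
  by rewrite !mxE -scalerAr residueZ mulrC.
rewrite det_mulmx [X in _ * X](_ : _ = 1) ?mulr1 //.
rewrite -det_tr det_trig.
  rewrite (eq_bigr (fun=> 1)) ?big1_eq // => j _.
  by rewrite !mxE -(monicP (mh j)) /lead_coef sh.
apply/forallP => i; apply/forallP => j; apply/implyP => ij.
by rewrite !mxE nth_default // sh.
Qed.

End ResidueDeterminant.

Section Evaluation.
Variables (a : int -> CC) (mu : seq nat).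
Hypothesis mu_part : is_partition mu.
Local Notation N := (size mu).
Local Notation rowpoly := (rowpoly a mu).
Local Notation colpoly := (colpoly a mu).
Local Notation facpow := (facpow a).

Lemma rootpoly_x_pt : rootpoly (x_pt mu a) = rowpoly 1.
Proof.
rewrite rowpoly1 // /rootpoly big_map (iotaDl 1 0) big_map big_iota_ord.
by apply: eq_bigr => m _; rewrite /part /rowpos add1n /=; congr ('X - (a _)%:P); lia.
Qed.

Lemma rootpoly_y_pt : rootpoly (map -%R (y_pt mu a)) = colpoly 1.
Proof.
rewrite colpoly1 // /rootpoly -map_comp big_map (iotaDl 1 0) big_map big_iota_ord.
apply: eq_bigr => m _; rewrite /= /dual_seq opprK /colpos.
by rewrite add1n; congr ('X - (a _)%:P); lia.
Qed.

Lemma size_rowpoly_rowpos i : (i < N)%N -> size (rowpoly (rowpos mu i)) = i.+2.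
Proof.
by move=> i_lt; rewrite rowpoly_rowpos // (size_prod_ord_XsubC _ (a \o rowpos mu)).
Qed.

Lemma size_colpoly_rowpos i : (i < N)%N ->
  size (colpoly (rowpos mu i)) = (nth 0%N mu i).+1.
Proof.
by move=> i_lt; rewrite colpoly_rowpos // (size_prod_ord_XsubC _ (a \o colpos mu)).
Qed.

Lemma residue_rowpos_nonpos i j : (i < N)%N -> rowpos mu i + j%:Z <= 0 ->
  residue (rowpoly (rowpos mu i)) (colpoly (rowpos mu i) * facpow (1 - j%:Z) j) =
  (rowpos mu i + j%:Z == 0)%:R.
Proof.
move=> i_lt k_le0.
have size_prod : size (colpoly (rowpos mu i) * facpow (1 - j%:Z) j) = (nth 0%N mu i + j).+1.
  rewrite size_Mmonic ?monic_neq0 ?facpow_monic ?colpoly_monic //.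
  by rewrite size_colpoly_rowpos // size_facpow addnS.
have lead1 : lead_coef (colpoly (rowpos mu i) * facpow (1 - j%:Z) j) = 1.
  by apply/monicP; rewrite rpredM ?colpoly_monic ?facpow_monic.
rewrite residue_small size_rowpoly_rowpos // ?size_prod; last first.
  by move: k_le0; rewrite /rowpos; lia.
move: k_le0; rewrite le_eqVlt => /orP[/eqP k0 | k_lt0].
  rewrite k0 eqxx -lead1 /lead_coef size_prod /=; congr (_`_ _).
  by move: k0; rewrite /rowpos; lia.
rewrite lt_eqF // nth_default // size_prod; move: k_lt0; rewrite /rowpos; lia.
Qed.

Lemma residue_rowpos_pos i j n : (i < N)%N -> rowpos mu i + j%:Z = n.+1%:Z ->
  residue (rowpoly (rowpos mu i)) (colpoly (rowpos mu i) * facpow (1 - j%:Z) j) =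
  residue (rowpoly 1) (colpoly 1 * facpow (1 - j%:Z) n).
Proof.
move=> i_lt k_eq; set r := rowpos mu i.
have r_le : r <= (nth 0%N mu 0)%:Z.
  by have := leq_nth_partition mu_part (leq0n i); rewrite /r /rowpos; lia.
have r_ge : 1 - N%:Z < r.
  by have := nth_partition_gt0 mu_part i_lt; rewrite /r /rowpos; lia.
have [r_gt0|r_le0] := ltP 0 r.
  have -> : n = (j + `|(r - 1)%R|)%N by lia.
  rewrite facpowD (_ : 1 - j%:Z + j%:Z = 1); last by lia.
  rewrite mulrA mulrAC (residue_shift a mu_part); [|lia|lia].
  by congr (residue (rowpoly _) (colpoly _ * _)); lia.
have -> : j = (n + `|(1 - r)%R|)%N by lia.
rewrite facpowD (_ : 1 - (n + `|(1 - r)%R|)%N%:Z + n%:Z = r); last by lia.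
rewrite mulrA mulrAC (residue_shift a mu_part); [|lia|lia].
by congr (residue (rowpoly _) (colpoly _ * facpow _ _)); lia.
Qed.

Lemma hka_xy_pt_entry i j : (i < N)%N ->
  hka_xy (x_pt mu a) (y_pt mu a) (tau (1 - j.+1%:Z) a)
    ((part mu i.+1)%:Z - i.+1%:Z + j.+1%:Z) =
  residue (rowpoly (rowpos mu i)) (colpoly (rowpos mu i) * facpow (1 - j%:Z) j).
Proof.
move=> i_lt.
have -> : (part mu i.+1)%:Z - i.+1%:Z + j.+1%:Z = rowpos mu i + j%:Z.
  by rewrite /part /rowpos /=; lia.
case k_eq: (rowpos mu i + j%:Z) => [[|n]|n].
- by rewrite residue_rowpos_nonpos ?k_eq.
- rewrite (residue_rowpos_pos i_lt k_eq) hka_residue ?size_map //.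
  rewrite rootpoly_x_pt rootpoly_y_pt mulrC -rootpoly_facpow.
  congr (residue _ (_ * rootpoly _)).
  by apply: eq_map => k; rewrite /tau; congr a; lia.
- by rewrite residue_rowpos_nonpos ?k_eq.
Qed.

Lemma s_mu_a_xy_pt : s_mu_a_xy mu a (x_pt mu a) (y_pt mu a) = box_prod1 mu a.
Proof.
pose Q (i : 'I_N) := rowpoly (rowpos mu i).
pose P (i : 'I_N) := colpoly (rowpos mu i).
pose rowprefix (j : nat) := \prod_(m < j) ('X - (a (rowpos mu m))%:P).
have Q_rowprefix (i : 'I_N) : Q i = rowprefix i.+1 by rewrite /Q rowpoly_rowpos.
have -> : s_mu_a_xy mu a (x_pt mu a) (y_pt mu a) =
    \det (\matrix_(i, j) residue (Q i) (P i * facpow (1 - j%:Z) j)).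
  by rewrite /s_mu_a_xy; congr (\det _); apply/matrixP => i j; rewrite !mxE hka_xy_pt_entry.
rewrite (det_residue_monic_basis _ _ (g := fun j : 'I_N => rowprefix j)); first last.
- by move=> j; apply: (size_prod_ord_XsubC _ (fun m => a (rowpos mu m))).
- by move=> j; apply: monic_prod_XsubC.
- by move=> j; apply: size_facpow.
- by move=> j; apply: facpow_monic.
rewrite det_trig; last first.
  apply/forallP => i; apply/forallP => j; apply/implyP => ij; rewrite mxE.
  rewrite /rowprefix -(big_mkord xpredT (fun m => 'X - (a (rowpos mu m))%:P)).
  rewrite (big_cat_nat (leq0n i.+1) ij) /= big_mkord -/(rowprefix i.+1) -Q_rowprefix.
  by rewrite mulrCA mulrC residue_mull.
rewrite /box_prod1; apply: eq_bigr => i _.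
rewrite mxE Q_rowprefix /rowprefix big_ord_recr /=.
rewrite mulrC residue_XsubC ?monic_prod_XsubC // /P colpoly_rowpos // horner_prod /part /=.
by apply: eq_bigr => m _; rewrite hornerXsubC /rowpos /colpos; congr (a _ - a _); lia.
Qed.

End Evaluation.

Lemma box_prod1_dual (mu : seq nat) (a : int -> CC) : box_prod1 mu a = box_prod2 mu a.
Proof.
apply: eq_bigr => i _; apply: eq_bigr => j _.
by rewrite /dual_seq; congr (_ - a _); lia.
Qed.

Lemma box_prod1_neq0 (mu : seq nat) (a : int -> CC) : injective a -> is_partition mu ->
  box_prod1 mu a != 0.
Proof.
move=> a_inj mu_part; apply/prodf_neq0 => i _; apply/prodf_neq0 => j _.
rewrite subr_eq0 (inj_eq a_inj); have := rowpos_neq_colpos mu_part i j.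
by rewrite /rowpos /colpos /part /=; apply: contra => /eqP eq_pos; apply/eqP; lia.
Qed.

Theorem theorem11 :
  (forall (a : int -> CC) (mu : seq nat), is_partition mu ->
     s_mu_a_xy mu a (x_pt mu a) (y_pt mu a) = box_prod1 mu a /\
     box_prod1 mu a = box_prod2 mu a) /\
  (forall a : int -> CC, injective a ->
     forall mu : seq nat, is_partition mu ->
       s_mu_a_xy mu a (x_pt mu a) (y_pt mu a) != 0).
Proof.
split=> [a mu mu_part | a a_inj mu mu_part].
  by rewrite s_mu_a_xy_pt // box_prod1_dual.
by rewrite s_mu_a_xy_pt // box_prod1_neq0.
Qed.
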